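(* Let $\mathcal{H}$ be a finite-dimensional real inner-product space with norm $\|\cdot\|_{\mathcal{H}}$, and let $\mathscr{R}_*:\mathcal{H}\to\mathcal{H}$ be a continuous quasinonexpansive operator with nonempty fixed-point set $\mathrm{Fix}(\mathscr{R}_* )$. Let $(\mathscr{R}^{(k)})_{k\in\mathbb{N}}$ be a sequence of (possibly random) operators $\mathcal{H}\to\mathcal{H}$, and consider the iteration \[ x^{(k+1)} = (1-\gamma^{(k)})\,x^{(k)} + \gamma^{(k)}\,\mathscr{R}^{(k)}(x^{(k)}), \qquad k\in\mathbb{N}, \] with step sizes $\gamma^{(k)}\in[0,1]$ satisfying $\sum_{k\in\mathbb{N}}\gamma^{(k)}(1-\gamma^{(k)}) = +\infty$. Define the error $\epsilon^{(k)} \coloneqq \mathscr{R}^{(k)}(x^{(k)}) - \mathscr{R}_*(x^{(k)})$ and $\varepsilon^{(k)} \coloneqq \|\epsilon^{(k)}\|_{\mathcal{H}}$. Let $(\mathcal{F}_k)_{k\in\mathbb{N}}$ be a filtration such that $x^{(k)}$ is $\mathcal{F}_k$-measurable for each $k$. Suppose that almost surely the sequence $(x^{(k)})_{k\in\mathbb{N}}$ is bounded and $\sum_{k\in\mathbb{N}}\gamma^{(k)}\,\mathbb{E}[\varepsilon^{(k)}\mid\mathcal{F}_k] < +\infty$. Then $(x^{(k)})_{k\in\mathbb{N}}$ converges almost surely to a (random) point $x^\dagger \in \mathrm{Fix}(\mathscr{R}_* )$.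
   Context: An operator $\mathscr{R}_*:\mathcal{H}\to\mathcal{H}$ is quasinonexpansive if $\mathrm{Fix}(\mathscr{R}_* )=\{x:\mathscr{R}_*(x)=x\}$ is nonempty and $\|\mathscr{R}_*(x)-x^*\|_{\mathcal{H}}\le\|x-x^*\|_{\mathcal{H}}$ for all $x\in\mathcal{H}$ and all $x^*\in\mathrm{Fix}(\mathscr{R}_* )$. All random objects are defined on a common probability space. *)

From HB Require Import structures.
From mathcomp Require Import all_boot all_order all_algebra.
From mathcomp Require Import all_classical all_reals all_analysis.
From mathcomp Require Import measurable_realfun.
Set Implicit Arguments. Unset Strict Implicit. Unset Printing Implicit Defensive.
Import Order.TTheory GRing.Theory Num.Theory.
Import numFieldNormedType.Exports.
Local Open Scope classical_set_scope.
Local Open Scope ring_scope.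

(* The finite-dimensional real inner-product space H is modelled as
   'rV[R]_n with the standard (Euclidean) inner product; every
   n-dimensional real inner-product space is isometric to it. *)

Definition edot {R : realType} {n : nat} (u v : 'rV[R]_n) : R :=
  \sum_(i < n) u ord0 i * v ord0 i.
Definition enorm {R : realType} {n : nat} (v : 'rV[R]_n) : R :=
  Num.sqrt (edot v v).

Definition Fix {R : realType} {n : nat} (F : 'rV[R]_n -> 'rV[R]_n) : set 'rV[R]_n :=
  [set x | F x = x].
Definition quasinonexpansive {R : realType} {n : nat} (F : 'rV[R]_n -> 'rV[R]_n) : Prop :=
  Fix F !=set0 /\
  forall x xs, Fix F xs -> enorm (F x - xs) <= enorm (x - xs).

Definition G_measurable_R {d} {T : measurableType d} {R : realType}
  (G : set (set T)) (f : T -> R) : Prop :=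
  forall B : set R, measurable B -> G (f @^-1` B).
Definition G_measurable_eR {d} {T : measurableType d} {R : realType}
  (G : set (set T)) (f : T -> \bar R) : Prop :=
  forall B : set (\bar R), measurable B -> G (f @^-1` B).
(* An R^n-valued map is G-measurable (Borel) iff all its coordinates are. *)
Definition G_measurable_vec {d} {T : measurableType d} {R : realType} {n : nat}
  (G : set (set T)) (f : T -> 'rV[R]_n) : Prop :=
  forall i : 'I_n, G_measurable_R G (fun w => f w ord0 i).

Definition filtration {d} {T : measurableType d} (F : nat -> set (set T)) : Prop :=
  (forall k, sigma_algebra setT (F k)) /\
  (forall k, F k `<=` measurable) /\
  (forall k, F k `<=` F k.+1).

(** Y is a version of the (generalized) conditional expectation E[X | G]
    of the nonnegative random variable X. *)
Definition cond_exp_nonneg {d} {T : measurableType d} {R : realType}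
  (P : probability T R) (G : set (set T)) (X Y : T -> \bar R) : Prop :=
  [/\ measurable_fun setT X, (forall w, (0 <= X w)%E),
      G_measurable_eR G Y, (forall w, (0 <= Y w)%E) &
      forall A, G A -> (\int[P]_(w in A) Y w = \int[P]_(w in A) X w)%E].

From HB Require Import structures.
From mathcomp Require Import all_boot all_order all_algebra.
From mathcomp Require Import all_classical all_reals all_analysis.
From mathcomp Require Import measurable_realfun.
From mathcomp Require Import ring lra.
Set Implicit Arguments. Unset Strict Implicit. Unset Printing Implicit Defensive.
Import Order.TTheory GRing.Theory Num.Theory.
Import numFieldNormedType.Exports.
Local Open Scope classical_set_scope.
Local Open Scope ring_scope.

(* Pathwise, the iteration is a Krasnosel'skii-Mann scheme for [R*] perturbed
   by the errors [e_k = R^(k) x_k - R* x_k].  If [sum gamma_k |e_k|] is finite,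
   the distance to every fixed point is quasi-Fejer, and the identity
     |(1 - g) u + g v|^2 = (1 - g) |u|^2 + g |v|^2 - g (1 - g) |u - v|^2
   makes [sum gamma_k (1 - gamma_k) |x_k - R* x_k|^2] finite; as
   [sum gamma_k (1 - gamma_k)] diverges, the residual [|x_k - R* x_k|] has
   liminf 0.  A cluster point of the bounded iterates along small residuals is
   fixed by continuity of [R*], and quasi-Fejer monotonicity then forces the
   whole sequence to converge to it.
   Almost surely [sum gamma_k |e_k|] is finite: the partial sums of
   [gamma_k E[|e_k| | F_k]] are adapted, so on the events where they stay below
   [M] the truncated series of [gamma_k |e_k|] has expectation at most [M]. *)

Section euclidean.
Variables (R : realType) (n : nat).
Implicit Types (u v w : 'rV[R]_n) (a : R).

Lemma edotC u v : edot u v = edot v u.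
Proof. by apply: eq_bigr => i _; rewrite mulrC. Qed.

Lemma edotDl u v w : edot (u + v) w = edot u w + edot v w.
Proof. by rewrite /edot -big_split; apply: eq_bigr => i _; rewrite mxE mulrDl. Qed.

Lemma edotZl a u w : edot (a *: u) w = a * edot u w.
Proof. by rewrite /edot mulr_sumr; apply: eq_bigr => i _; rewrite mxE mulrA. Qed.

Lemma edotNl u w : edot (- u) w = - edot u w.
Proof. by rewrite -scaleN1r edotZl mulN1r. Qed.

Lemma edotDr u v w : edot w (u + v) = edot w u + edot w v.
Proof. by rewrite edotC edotDl !(edotC w). Qed.

Lemma edotZr a u w : edot w (a *: u) = a * edot w u.
Proof. by rewrite edotC edotZl edotC. Qed.

Lemma edotNr u w : edot w (- u) = - edot w u.
Proof. by rewrite edotC edotNl edotC. Qed.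

Lemma edot0r u : edot u 0 = 0.
Proof. by rewrite /edot big1 // => i _; rewrite mxE mulr0. Qed.

Lemma edot_ge0 u : 0 <= edot u u.
Proof. by apply: sumr_ge0 => i _; rewrite -expr2 sqr_ge0. Qed.

Lemma edot_eq0 u : (edot u u == 0) = (u == 0).
Proof.
apply/idP/eqP => [|->]; last by rewrite edot0r.
rewrite psumr_eq0 => [/allP u0|i _]; last by rewrite -expr2 sqr_ge0.
apply/rowP => j; rewrite mxE.
by have /= := u0 j (mem_index_enum j); rewrite mulf_eq0 orbb => /eqP.
Qed.

Lemma enorm_ge0 u : 0 <= enorm u.
Proof. exact: sqrtr_ge0. Qed.

Lemma enorm_sqr u : enorm u ^+ 2 = edot u u.
Proof. by rewrite sqr_sqrtr // edot_ge0. Qed.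

Lemma enorm_eq0 u : (enorm u == 0) = (u == 0).
Proof. by rewrite sqrtr_eq0 le_eqVlt ltNge edot_ge0 orbF edot_eq0. Qed.

Lemma edot_le_enormM u v : edot u v <= enorm u * enorm v.
Proof.
have [v0|v_neq0] := eqVneq v 0; first by rewrite v0 edot0r mulr_ge0 ?enorm_ge0.
have vv_gt0 : 0 < edot v v by rewrite lt0r edot_eq0 v_neq0 edot_ge0.
(* Cauchy-Schwarz from |<v,v> u - <u,v> v|^2 >= 0. *)
have := edot_ge0 (edot v v *: u - edot u v *: v).
rewrite !(edotDl, edotDr, edotNl, edotNr, edotZl, edotZr) (edotC v u) => expand_ge0.
have uu_ge0 := edot_ge0 u.
have sqr_le : edot u v ^+ 2 <= edot u u * edot v v by nra.
apply: le_trans (ler_norm _) _.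
by rewrite -sqrtr_sqr /enorm -sqrtrM ?edot_ge0 // ler_sqrt ?mulr_ge0 ?edot_ge0.
Qed.

Lemma enormD u v : enorm (u + v) <= enorm u + enorm v.
Proof.
have uv_ge0 := addr_ge0 (enorm_ge0 u) (enorm_ge0 v).
rewrite {1}/enorm -(ger0_norm uv_ge0) -sqrtr_sqr ler_sqrt ?sqr_ge0 //.
rewrite edotDl !edotDr (edotC v u) sqrrD !enorm_sqr.
have := edot_le_enormM u v; lra.
Qed.

Lemma enormZ a u : enorm (a *: u) = `|a| * enorm u.
Proof.
by rewrite /enorm edotZl edotZr mulrA -expr2 sqrtrM ?sqr_ge0 // sqrtr_sqr.
Qed.

Lemma enormN u : enorm (- u) = enorm u.
Proof. by rewrite -scaleN1r enormZ normrN1 mul1r. Qed.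

Lemma enormB u v : enorm (u - v) = enorm (v - u).
Proof. by rewrite -opprB enormN. Qed.

Lemma enorm_convex_sqr a u v :
  enorm ((1 - a) *: u + a *: v) ^+ 2 =
  (1 - a) * enorm u ^+ 2 + a * enorm v ^+ 2 - a * (1 - a) * enorm (u - v) ^+ 2.
Proof.
rewrite !enorm_sqr !(edotDl, edotDr, edotNl, edotNr, edotZl, edotZr) (edotC v u).
ring.
Qed.

Lemma mx_norm_le_enorm u : `|u| <= enorm u.
Proof.
rewrite [leLHS]/Num.Def.normr /= mx_normrE.
apply: bigmax_le => [|[i j] _]; first exact: enorm_ge0.
rewrite (ord1 i) -sqrtr_sqr ler_sqrt ?edot_ge0 // /edot (bigD1 j) //= -expr2.
by rewrite lerDl; apply: sumr_ge0 => k _; rewrite -expr2 sqr_ge0.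
Qed.

Lemma enorm_le_mx_norm u : enorm u <= n%:R * `|u|.
Proof.
have coord_le i : `|u ord0 i| <= `|u|.
  by rewrite [leRHS]/Num.Def.normr /= mx_normrE; exact: (le_bigmax _ _ (ord0, i)).
have nu_ge0 : 0 <= n%:R * `|u| by rewrite mulr_ge0.
rewrite {1}/enorm -(ger0_norm nu_ge0) -sqrtr_sqr ler_sqrt ?sqr_ge0 //.
apply: le_trans (_ : \sum_(i < n) `|u| ^+ 2 <= _).
  apply: ler_sum => i _; rewrite -expr2 -real_normK ?num_real //.
  by rewrite ler_sqr ?nnegrE ?normr_ge0 ?coord_le.
rewrite sumr_const card_ord -[leLHS]mulr_natl exprMn ler_wpM2r ?sqr_ge0 //.
by rewrite -natrX ler_nat; case: (n) => // m; rewrite expnS leq_pmulr // expn_gt0.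
Qed.

Lemma nbhs_enorm_lt (c : 'rV[R]_n) (e : R) : 0 < e -> nbhs c [set y | enorm (c - y) < e].
Proof.
move=> e_gt0; have n1_gt0 : 0 < n%:R + 1 :> R by rewrite ltr_wpDl.
apply: filterS (nbhsx_ballx c (e / (n%:R + 1)) _); last by rewrite divr_gt0.
move=> y; rewrite -ball_normE /= ltr_pdivlMr // => cy.
apply: le_lt_trans (enorm_le_mx_norm _) (le_lt_trans _ cy).
by rewrite [leLHS]mulrC ler_wpM2l // lerDl.
Qed.
End euclidean.

Section nonneg_series.
Variable R : realType.

Lemma nneseries_le_ub (u : nat -> \bar R) (M : \bar R) :
  (forall k, 0 <= u k)%E -> (forall N, \sum_(0 <= k < N) u k <= M)%E ->
  (\sum_(0 <= k <oo) u k <= M)%E.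
Proof.
move=> u_ge0 uM; apply: lime_le; first exact: is_cvg_ereal_nneg_natsum.
exact: nearW.
Qed.

Variable u : nat -> R.
Hypothesis u_ge0 : forall k, 0 <= u k.
Hypothesis u_fin : (\sum_(0 <= k <oo) (u k)%:E < +oo)%E.

Lemma nneseries_partial_le : exists B, forall N, \sum_(0 <= k < N) u k <= B.
Proof.
have su_ge0 : (0 <= \sum_(0 <= k <oo) (u k)%:E)%E.
  by apply: nneseries_ge0 => k _ _; rewrite lee_fin.
exists (fine (\sum_(0 <= k <oo) (u k)%:E)) => N.
rewrite -lee_fin fineK ?ge0_fin_numE // -sumEFin.
by apply: nneseries_lim_ge => k _ _; rewrite lee_fin.
Qed.

Lemma nneseries_tail_lt e : 0 < e ->
  exists K, forall m, (K <= m)%N -> \sum_(K <= k < m) u k < e.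
Proof.
move=> e_gt0; have [B uB] := nneseries_partial_le.
have cvg_u : cvgn (series u).
  apply: nondecreasing_is_cvgn; last by exists B => _ [N _ <-]; exact: uB.
  by apply/nondecreasing_seqP => N; rewrite /series /= big_nat_recr //= lerDl.
have := (cauchy_seriesP u).1 (cvg_cauchy _ cvg_u) e e_gt0.
move=> [[A1 A2] [/= [K1 _ sK1] [K2 _ sK2]] sA].
exists (maxn K1 K2) => m Km; rewrite -[ltLHS]ger0_norm ?sumr_ge0 //.
apply: (sA (maxn K1 K2, m)); split; [apply: sK1 | apply: sK2] => /=.
  exact: leq_maxl.
exact: leq_trans (leq_maxr _ _) Km.
Qed.

End nonneg_series.

Lemma compact_cluster_along {R : realDomainType} {T : topologicalType}
    (K : set T) (u : nat -> T) (r : nat -> R) :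
  compact K -> (forall k, K (u k)) ->
  (forall N d, 0 < d -> exists2 k, (N <= k)%N & r k < d) ->
  exists c : T, forall N d (B : set T), 0 < d -> nbhs c B ->
    exists k, [/\ (N <= k)%N, r k < d & B (u k)].
Proof.
move=> cK Ku r_small.
pose G := filter_from [set p : nat * R | 0 < p.2]
  (fun p => [set k | (p.1 <= k)%N /\ r k < p.2]).
have G_proper : ProperFilter G.
  apply: filter_from_proper; first apply: filter_from_filter.
  - by exists (0%N, 1); rewrite /= ltr01.
  - move=> [N1 d1] [N2 d2] /= d1_gt0 d2_gt0.
    exists (maxn N1 N2, Num.min d1 d2); first by rewrite /= lt_min d1_gt0.
    move=> k /= [Nk]; rewrite lt_min => /andP[rk1 rk2].
    by rewrite !geq_max in Nk; case/andP: Nk.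
  - by move=> [N d] /= /(r_small N) [k Nk rk]; exists k.
have [c [_ c_cluster]] := cK (u @ G) _ (filterE _ Ku).
exists c => N d B d_gt0 cB.
have [|_ [[k [Nk rk] <-] Buk]] := c_cluster (u @` [set k | (N <= k)%N /\ r k < d]) B _ cB.
  by exists (N, d) => // k Gk; exists k.
by exists k.
Qed.

Lemma compact_mx_norm_le (R : realType) n (B : R) :
  compact [set v : 'rV[R]_n | `|v| <= B].
Proof.
apply: bounded_closed_compact.
  by exists B; split=> [|M BM v /= vB]; [exact: num_real | exact: le_trans vB (ltW BM)].
by apply: (preimage_closed _ (@closed_le _ B)) => v _; exact: norm_continuous.
Qed.

Section km_with_errors.
Variables (R : realType) (n : nat).
Local Notation V := 'rV[R]_n.
Variables (Rs : V -> V) (x e : nat -> V) (gam : nat -> R).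
Hypothesis Rs_qne : quasinonexpansive Rs.
Hypothesis x_rec : forall k, x k.+1 = (1 - gam k) *: x k + gam k *: (Rs (x k) + e k).
Hypothesis gam01 : forall k, 0 <= gam k <= 1.

Local Notation err k := (gam k * enorm (e k)).
Local Notation residual k := (enorm (x k - Rs (x k))).

Let gam_ge0 k : 0 <= gam k. Proof. by case/andP: (gam01 k). Qed.
Let gam_le1 k : gam k <= 1. Proof. by case/andP: (gam01 k). Qed.
Let err_ge0 k : 0 <= err k. Proof. by rewrite mulr_ge0 ?enorm_ge0. Qed.

Lemma iterate_subE z k :
  x k.+1 - z = ((1 - gam k) *: (x k - z) + gam k *: (Rs (x k) - z)) + gam k *: e k.
Proof. by apply/rowP => i; rewrite x_rec !mxE; ring. Qed.

Lemma relaxed_step_le z k : Fix Rs z ->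
  enorm ((1 - gam k) *: (x k - z) + gam k *: (Rs (x k) - z)) <= enorm (x k - z).
Proof.
move=> Fz; apply: le_trans (enormD _ _) _.
rewrite !enormZ (ger0_norm (gam_ge0 k)) ger0_norm ?subr_ge0 //.
have := Rs_qne.2 (x k) z Fz; have := gam_ge0 k; have := gam_le1 k.
have := enorm_ge0 (x k - z); have := enorm_ge0 (Rs (x k) - z); nra.
Qed.

Lemma dist_fix_step z k : Fix Rs z -> enorm (x k.+1 - z) <= enorm (x k - z) + err k.
Proof.
move=> Fz; rewrite iterate_subE; apply: le_trans (enormD _ _) _.
by rewrite enormZ (ger0_norm (gam_ge0 k)) lerD2r relaxed_step_le.
Qed.

Lemma dist_fix_le z K m : Fix Rs z -> (K <= m)%N ->
  enorm (x m - z) <= enorm (x K - z) + \sum_(K <= k < m) err k.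
Proof.
move=> Fz; elim: m => [|m IH]; first by rewrite leqn0 => /eqP ->; rewrite big_geq ?addr0.
rewrite leq_eqVlt => /orP[/eqP <-|]; first by rewrite big_geq ?addr0.
rewrite ltnS => Km; rewrite big_nat_recr //=.
have := IH Km; have := dist_fix_step m Fz; lra.
Qed.

Hypothesis err_fin : (\sum_(0 <= k <oo) (err k)%:E < +oo)%E.

Lemma iterates_bounded : exists B, forall k, `|x k| <= B.
Proof.
have [z Fz] := Rs_qne.1; have [B errB] := nneseries_partial_le err_ge0 err_fin.
exists (enorm (x 0 - z) + B + `|z|) => k.
rewrite -[x k](subrK z); apply: le_trans (ler_normD _ _) _; rewrite lerD2r.
apply: le_trans (mx_norm_le_enorm _) _; apply: le_trans (dist_fix_le Fz (leq0n k)) _.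
by rewrite lerD2l.
Qed.

Lemma cvg_to_fix_cluster xb : Fix Rs xb ->
  (forall N B, nbhs xb B -> exists2 k, (N <= k)%N & B (x k)) -> x @ \oo --> xb.
Proof.
move=> Fxb xb_cluster; apply/cvgrPdist_lt => eps eps_gt0.
have eps2_gt0 : 0 < eps / 2 by rewrite divr_gt0.
have [K tailK] := nneseries_tail_lt err_ge0 err_fin eps2_gt0.
have [k Kk xk_close] := xb_cluster K _ (nbhs_enorm_lt xb eps2_gt0).
exists k => // m /= km.
apply: le_lt_trans (mx_norm_le_enorm _) _; rewrite enormB.
apply: le_lt_trans (dist_fix_le Fxb km) _; rewrite enormB.
have := tailK m (leq_trans Kk km).
rewrite (big_cat_nat Kk km) /=.
have : 0 <= \sum_(K <= i < k) err i by rewrite sumr_ge0.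
move: xk_close => /=; lra.
Qed.

Lemma residual_step z k A Bs : Fix Rs z -> enorm (x k - z) <= A -> err k <= Bs ->
  gam k * (1 - gam k) * residual k ^+ 2 <=
  enorm (x k - z) ^+ 2 - enorm (x k.+1 - z) ^+ 2 + (2 * A + Bs) * err k.
Proof.
move=> Fz zA errB.
set w := (1 - gam k) *: (x k - z) + gam k *: (Rs (x k) - z).
have next_le : enorm (x k.+1 - z) <= enorm w + err k.
  rewrite iterate_subE; apply: le_trans (enormD _ _) _.
  by rewrite enormZ (ger0_norm (gam_ge0 k)).
have w_sqr : enorm w ^+ 2 <= enorm (x k - z) ^+ 2 - gam k * (1 - gam k) * residual k ^+ 2.
  rewrite enorm_convex_sqr opprB addrA subrK.
  have Rs_sqr : enorm (Rs (x k) - z) ^+ 2 <= enorm (x k - z) ^+ 2.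
    by rewrite ler_sqr ?nnegrE ?enorm_ge0 ?(Rs_qne.2 _ _ Fz).
  have := gam_ge0 k; nra.
have next_sqr : enorm (x k.+1 - z) ^+ 2 <= enorm w ^+ 2 + (2 * A + Bs) * err k.
  have w_le : enorm w <= A := le_trans (relaxed_step_le k Fz) zA.
  have := enorm_ge0 w; have := enorm_ge0 (x k.+1 - z); have := err_ge0 k; nra.
lra.
Qed.

Lemma residual_series_bounded : exists C, forall N,
  \sum_(0 <= k < N) gam k * (1 - gam k) * residual k ^+ 2 <= C.
Proof.
have [z Fz] := Rs_qne.1; have [B errB] := nneseries_partial_le err_ge0 err_fin.
have B_ge0 : 0 <= B by have := errB 0%N; rewrite big_geq.
set A := enorm (x 0 - z) + B.
have distA k : enorm (x k - z) <= A.
  by apply: le_trans (dist_fix_le Fz (leq0n k)) _; rewrite lerD2l.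
have err_leB k : err k <= B.
  apply: le_trans (errB k.+1); rewrite big_nat_recr //= lerDr.
  by apply: sumr_ge0 => i _; exact: err_ge0.
have telescope N : \sum_(0 <= k < N) gam k * (1 - gam k) * residual k ^+ 2 <=
    enorm (x 0 - z) ^+ 2 - enorm (x N - z) ^+ 2 + (2 * A + B) * \sum_(0 <= k < N) err k.
  elim: N => [|N IH]; first by rewrite !big_geq // subrr mulr0 addr0.
  rewrite !big_nat_recr //= mulrDr.
  have := residual_step Fz (distA N) (err_leB N); lra.
exists (A ^+ 2 + (2 * A + B) * B) => N; apply: le_trans (telescope N) _.
have := errB N; have := enorm_ge0 (x 0 - z); have := sqr_ge0 (enorm (x N - z)).
rewrite /A; nra.
Qed.

Hypothesis gam_div : (\sum_(0 <= k <oo) (gam k * (1 - gam k))%:E = +oo)%E.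

Lemma residual_small_often N d : 0 < d -> exists2 k, (N <= k)%N & residual k < d.
Proof.
move=> d_gt0; apply: contrapT => no_small.
have residual_big k : (N <= k)%N -> d <= residual k.
  by move=> Nk; rewrite leNgt; apply/negP => small; apply: no_small; exists k.
have [C C_bound] := residual_series_bounded.
have weight_ge0 k : 0 <= gam k * (1 - gam k) by rewrite mulr_ge0 ?subr_ge0.
have weight_le1 k : gam k * (1 - gam k) <= 1.
  by have := gam_ge0 k; have := gam_le1 k; nra.
have weight_le k : (N <= k)%N ->
    gam k * (1 - gam k) <= gam k * (1 - gam k) * residual k ^+ 2 / d ^+ 2.
  move=> Nk; rewrite ler_pdivlMr ?exprn_gt0 //; apply: ler_wpM2l => //.
  by rewrite ler_sqr ?nnegrE ?enorm_ge0 ?(ltW d_gt0) ?residual_big.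
have bound M : \sum_(0 <= k < M) gam k * (1 - gam k) <= N%:R + C / d ^+ 2.
  apply: le_trans (_ : \sum_(0 <= k < maxn M N) gam k * (1 - gam k) <= _).
    by rewrite [leRHS](big_cat_nat (leq0n M) (leq_maxl M N)) /= lerDl sumr_ge0.
  rewrite (big_cat_nat (leq0n N) (leq_maxr M N)) /=; apply: lerD.
    apply: le_trans (_ : \sum_(0 <= k < N) (1 : R) <= _).
      by apply: ler_sum => k _; exact: weight_le1.
    by rewrite sumr_const_nat subn0.
  apply: le_trans (_ : \sum_(N <= k < maxn M N)
      gam k * (1 - gam k) * residual k ^+ 2 / d ^+ 2 <= _).
    by apply: ler_sum_nat => k /andP[Nk _]; exact: weight_le.
  rewrite -mulr_suml ler_pM2r ?invr_gt0 ?exprn_gt0 //.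
  apply: le_trans (C_bound (maxn M N)).
  rewrite [leRHS](big_cat_nat (leq0n N) (leq_maxr M N)) /= lerDr.
  by apply: sumr_ge0 => k _; rewrite mulr_ge0 ?sqr_ge0.
have : (\sum_(0 <= k <oo) (gam k * (1 - gam k))%:E <= (N%:R + C / d ^+ 2)%:E)%E.
  apply: nneseries_le_ub => [k|M]; first by rewrite lee_fin.
  by rewrite sumEFin lee_fin bound.
by rewrite gam_div leye_eq.
Qed.

Hypothesis Rs_cont : continuous Rs.

Lemma fix_of_residual_cluster xb :
  (forall d B, 0 < d -> nbhs xb B -> exists2 k, residual k < d & B (x k)) ->
  Fix Rs xb.
Proof.
move=> xb_cluster; apply/esym/subr0_eq/eqP; rewrite -enorm_eq0 eq_le enorm_ge0 andbT.
apply/ler_addgt0Pr => eps eps_gt0; rewrite add0r.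
have d_gt0 : 0 < eps / 3 by rewrite divr_gt0.
have [k rk [/= xk_close Rxk_close]] := xb_cluster _ _ d_gt0
  (filterI (nbhs_enorm_lt xb d_gt0) (Rs_cont (nbhs_enorm_lt (Rs xb) d_gt0))).
have -> : xb - Rs xb = (xb - x k) + (x k - Rs (x k)) + (Rs (x k) - Rs xb).
  by rewrite !addrA subrK addrNK.
apply: le_trans (enormD _ _) _; apply: le_trans (lerD (enormD _ _) (lexx _)) _.
by rewrite (enormB (Rs (x k))); lra.
Qed.

Theorem km_cvg_fix : exists xb, x @ \oo --> xb /\ Fix Rs xb.
Proof.
have [B xB] := iterates_bounded.
have [xb xb_cluster] := compact_cluster_along (compact_mx_norm_le (B := B)) xB
  residual_small_often.
have Fxb : Fix Rs xb.
  apply: fix_of_residual_cluster => d A d_gt0 xbA.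
  by have [k [_ rk Axk]] := xb_cluster 0%N d A d_gt0 xbA; exists k.
exists xb; split => //; apply: cvg_to_fix_cluster => // N A xbA.
by have [k [Nk _ Axk]] := xb_cluster N 1 A ltr01 xbA; exists k.
Qed.

End km_with_errors.

Lemma G_measurable_eR_measurable d (T : measurableType d) (R : realType)
    (G : set (set T)) (f : T -> \bar R) :
  sigma_algebra setT G -> G_measurable_eR G f ->
  measurable_fun (setT : set (g_sigma_algebraType G)) f.
Proof.
move=> G_sigma f_meas _ B mB; rewrite setTI.
by rewrite (measurable_g_measurableTypeE G_sigma); exact: f_meas.
Qed.

Lemma ae_lt_pinfty_of_integral d (T : measurableType d) (R : realType)
    (mu : {measure set T -> \bar R}) (h : T -> \bar R) :
  measurable_fun setT h -> (forall w, 0 <= h w)%E ->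
  (\int[mu]_w h w < +oo)%E -> {ae mu, forall w, (h w < +oo)%E}.
Proof.
move=> mh h_ge0 h_fin.
have h_int : mu.-integrable setT h.
  by apply/integrableP; split => //; under eq_integral do rewrite gee0_abs //.
apply: filterS (integrable_ae measurableT h_int) => w /(_ I).
by rewrite ge0_fin_numE.
Qed.

Section conditional_summability.
Local Open Scope ereal_scope.
Context d (T : measurableType d) (R : realType) (P : probability T R).
Variables (F : nat -> set (set T)) (g : nat -> R) (X Y : nat -> T -> \bar R).
Hypothesis F_filt : filtration F.
Hypothesis g_ge0 : forall k, (0 <= g k)%R.
Hypothesis Y_cond : forall k, cond_exp_nonneg P (F k) (X k) (Y k).

Lemma filtration_le j k : (j <= k)%N -> F j `<=` F k.
Proof.
move=> /subnK <-; elim: (k - j)%N => [|i IH] //.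
by rewrite addSn; apply: subset_trans IH (F_filt.2.2 _).
Qed.

Let X_ge0 k w : 0 <= X k w. Proof. by have [_ + _ _ _] := Y_cond k. Qed.
Let Y_ge0 k w : 0 <= Y k w. Proof. by have [_ _ _ + _] := Y_cond k. Qed.
Let mX k : measurable_fun setT (X k). Proof. by have [] := Y_cond k. Qed.
Let mY k : measurable_fun setT (Y k).
Proof.
have [_ _ Y_meas _ _] := Y_cond k.
by move=> _ B mB; rewrite setTI; apply: (F_filt.2.1 k); exact: Y_meas.
Qed.

Let Ysum k w := \sum_(j < k.+1) (g j)%:E * Y j w.

Lemma adapted_Ysum_le k c : F k [set w | Ysum k w <= c].
Proof.
have F_sigma := F_filt.1 k.
have mYsum : measurable_fun (setT : set (g_sigma_algebraType (F k))) (Ysum k).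
  apply: emeasurable_sum => j; apply: measurable_funeM.
  apply: G_measurable_eR_measurable => // B mB.
  have [_ _ Y_meas _ _] := Y_cond j.
  by apply: (filtration_le (ltnSE (ltn_ord j))); exact: Y_meas.
have := emeasurable_fun_infty_c measurableT mYsum c.
by rewrite setTI measurable_g_measurableTypeE.
Qed.

Let mYsum_le k c : measurable [set w | Ysum k w <= c].
Proof. exact: F_filt.2.1 _ _ (adapted_Ysum_le k c). Qed.

(* Truncating at the [F k]-measurable events [Ysum k <= M] bounds the series
   of [g k * Y k] by [M] pathwise, without changing expectations termwise. *)
Let trunc (Z : nat -> T -> \bar R) (M : R) k :=
  (fun w => (g k)%:E * Z k w) \_ [set w | Ysum k w <= M%:E].

Let trunc_ge0 Z M k w : (forall k w, 0 <= Z k w) -> 0 <= trunc Z M k w.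
Proof. by move=> Z_ge0; apply: erestrict_ge0 => v _; rewrite mule_ge0 ?lee_fin. Qed.

Let measurable_trunc Z M k : measurable_fun setT (Z k) -> measurable_fun setT (trunc Z M k).
Proof.
move=> mZ; apply/(measurable_restrictT _ (mYsum_le k M%:E)).
by apply: (measurable_funS measurableT) => //; exact: measurable_funeM.
Qed.

Lemma integral_trunc_cond M k : \int[P]_w trunc X M k w = \int[P]_w trunc Y M k w.
Proof.
have mA := mYsum_le k M%:E.
rewrite -!integral_mkcond !ge0_integralZl_EFin //;
  [|exact: measurable_funS measurableT _ (mY k)|exact: measurable_funS measurableT _ (mX k)].
by have [_ _ _ _ ->] := Y_cond k; last exact: adapted_Ysum_le.
Qed.

Lemma trunc_Y_series_le M w : (0 <= M)%R -> \sum_(0 <= k <oo) trunc Y M k w <= M%:E.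
Proof.
move=> M_ge0; apply: nneseries_le_ub => [k|N]; first exact: trunc_ge0.
elim: N => [|N IH]; first by rewrite big_nil lee_fin.
rewrite big_nat_recr //= {2}/trunc /patch; case: ifPn => [|_]; last by rewrite adde0.
rewrite inE /= => YsumN; apply: le_trans YsumN.
rewrite /Ysum big_ord_recr /=; apply: leeD2r; rewrite big_mkord.
by apply: lee_sum => k _; rewrite /trunc /patch; case: ifP; rewrite ?mule_ge0 ?lee_fin.
Qed.

Lemma ae_trunc_X_series_lt_pinfty M : (0 <= M)%R ->
  {ae P, forall w, \sum_(0 <= k <oo) trunc X M k w < +oo}.
Proof.
move=> M_ge0; apply: ae_lt_pinfty_of_integral.
- apply: (ge0_emeasurable_sum (P := xpredT)) => [k w _ _|k _]; first exact: trunc_ge0.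
  exact: measurable_trunc.
- by move=> w; apply: nneseries_ge0 => k _ _; exact: trunc_ge0.
rewrite integral_nneseries //; last 2 first.
- by move=> k; exact: measurable_trunc (mX k).
- by move=> k w _; exact: trunc_ge0.
under eq_eseriesr do rewrite integral_trunc_cond.
rewrite -integral_nneseries //; last 2 first.
- by move=> k; exact: measurable_trunc (mY k).
- by move=> k w _; exact: trunc_ge0.
apply: le_lt_trans (_ : \int[P]_w (cst M%:E) w < +oo).
  apply: ge0_le_integral => //.
  - by move=> w _; apply: nneseries_ge0 => k _ _; exact: trunc_ge0.
  - apply: (ge0_emeasurable_sum (P := xpredT)) => [k w _ _|k _]; first exact: trunc_ge0.
    exact: measurable_trunc.
  - by move=> w _; exact: trunc_Y_series_le.
by rewrite integral_cst // [X in _ * X](_ : _ = 1) ?mule1 ?ltry //; exact: probability_setT.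
Qed.

Lemma ae_summable_of_cond_summable : {ae P, forall w,
  \sum_(0 <= k <oo) (g k)%:E * Y k w < +oo ->
  \sum_(0 <= k <oo) (g k)%:E * X k w < +oo}.
Proof.
apply: filterS (ae_foralln (fun M => ae_trunc_X_series_lt_pinfty (ler0n _ M))).
move=> w trunc_fin Ysum_fin.
set SY := \sum_(0 <= k <oo) (g k)%:E * Y k w in Ysum_fin.
have SY_ge0 : 0 <= SY by apply: nneseries_ge0 => k _ _; rewrite mule_ge0 ?lee_fin.
have [M SY_le] : exists M : nat, SY <= M%:R%:E.
  exists (Num.bound (fine SY)); rewrite -(fineK (_ : SY \is a fin_num)) ?ge0_fin_numE //.
  by rewrite lee_fin ltW // archi_boundP // fine_ge0.
have Ysum_le k : Ysum k w <= M%:R%:E.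
  apply: le_trans SY_le; rewrite /Ysum -(big_mkord xpredT (fun j => (g j)%:E * Y j w)).
  by apply: nneseries_lim_ge => j _ _; rewrite mule_ge0 ?lee_fin.
suff -> : \sum_(0 <= k <oo) (g k)%:E * X k w = \sum_(0 <= k <oo) trunc X M%:R k w.
  exact: trunc_fin.
by apply: eq_eseriesr => k _; rewrite /trunc patchT // inE; exact: Ysum_le.
Qed.

End conditional_summability.

Theorem mainTheorem2 (R : realType) (n : nat) (d : measure_display)
  (T : measurableType d) (P : probability T R)
  (Rstar : 'rV[R]_n -> 'rV[R]_n)
  (Rk : nat -> T -> 'rV[R]_n -> 'rV[R]_n)
  (x : nat -> T -> 'rV[R]_n)
  (gamma : nat -> R)
  (F : nat -> set (set T))
  (Econd : nat -> T -> \bar R) :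
  continuous Rstar ->
  quasinonexpansive Rstar ->
  (forall k w, x k.+1 w = (1 - gamma k) *: x k w + gamma k *: Rk k w (x k w)) ->
  (forall k, 0 <= gamma k <= 1) ->
  (\sum_(0 <= k <oo) ((gamma k * (1 - gamma k))%:E) = +oo)%E ->
  filtration F ->
  (forall k, G_measurable_vec (F k) (x k)) ->
  (forall k, cond_exp_nonneg P (F k)
               (fun w => (enorm (Rk k w (x k w) - Rstar (x k w)))%:E)
               (Econd k)) ->
  {ae P, forall w, (exists M : R, forall k, enorm (x k w) <= M) /\
                   (\sum_(0 <= k <oo) ((gamma k)%:E * Econd k w) < +oo)%E} ->
  exists xdag : T -> 'rV[R]_n,
    {ae P, forall w, ((fun k => x k w) @ \oo --> xdag w) /\ Fix Rstar (xdag w)}.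
Proof.
move=> Rs_cont Rs_qne x_rec gamma01 gamma_div F_filt _ Econd_cond ae_hyp.
have gamma_ge0 k : 0 <= gamma k by case/andP: (gamma01 k).
exists (fun w => lim ((fun k => x k w) @ \oo)).
apply: filterS2 (ae_summable_of_cond_summable F_filt gamma_ge0 Econd_cond) ae_hyp.
move=> w err_fin_of [_ /err_fin_of err_fin].
have x_rec_err k : x k.+1 w = (1 - gamma k) *: x k w +
    gamma k *: (Rstar (x k w) + (Rk k w (x k w) - Rstar (x k w))).
  by rewrite x_rec [Rstar _ + _]addrC subrK.
have [|xb [x_cvg Fxb]] := km_cvg_fix Rs_qne x_rec_err gamma01 _ gamma_div Rs_cont.
  by under eq_eseriesr do rewrite EFinM.
by rewrite (cvg_lim _ x_cvg).
Qed.
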